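(* Let $(V,\mathcal{E})$ be an arbitrary hypergraph with node set $V=\{v_1,\dots,v_N\}$ and hyperedges $\mathcal{E}=\{e_1,\dots,e_M\}$, $e_i\subset V$. Consider the SIS epidemic on it, i.e. the continuous-time Markov chain on $\{S,I\}^N$ with recovery rate $\gamma>0$, per-contact infection rate $\tau>0$, and nonlinearity $f(x)=x$ for $0\le x\le c$, $f(x)=c$ for $x>c$ (with $c>0$ a parameter), as described in the context. Let $X_\sigma(t)$ be the probability that the chain is in state $\sigma$ at time $t$ (these satisfy the Kolmogorov forward/master equations of the chain), and define $$[I](t)=\sum_{\sigma\in\{S,I\}^N} |\sigma|_I\, X_\sigma(t),\qquad [S](t)=\sum_{\sigma} (N-|\sigma|_I)\, X_\sigma(t),\qquad [SI](t)=\sum_{\sigma} N^f_{SI}(\sigma)\, X_\sigma(t),$$ where $|\sigma|_I$ is the number of infected nodes in $\sigma$ and $N^f_{SI}(\sigma)=\sum_{l:\ \sigma(l)=S}\ \sum_{h\in\mathcal{E}:\ v_l\in h} f\big(N_h(\sigma)\big)$. Then $$\dot{[S]}=\gamma[I]-\tau[SI],\qquad \dot{[I]}=\tau[SI]-\gamma[I].$$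
   Context: States are $\sigma\in\{S,I\}^N$, where $\sigma(l)$ is the state (susceptible $S$ or infected $I$) of node $v_l$. For a hyperedge $h$, $N_h(\sigma)$ denotes the number of infected nodes of $h$ in state $\sigma$. Transitions of the Markov chain: an infected node $v_l$ becomes susceptible (all other nodes unchanged) at rate $\gamma$; a susceptible node $v_l$ becomes infected (all other nodes unchanged) at rate $\tau\sum_{h\in\mathcal{E}:\,v_l\in h} f(N_h(\sigma))$, where $\sigma$ is the current state. No other transitions occur. *)

From HB Require Import structures.
From mathcomp Require Import all_boot all_order all_algebra.
From mathcomp Require Import all_classical all_reals all_analysis.
Set Implicit Arguments. Unset Strict Implicit. Unset Printing Implicit Defensive.
Import Order.TTheory GRing.Theory Num.Theory.
Local Open Scope ring_scope.

(* A state sigma in {S,I}^N is a finite function 'I_N -> bool,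
   with sigma l = true meaning node v_l is infected (I), false susceptible (S). *)
Definition state (N : nat) := {ffun 'I_N -> bool}.

Definition fnl {R : realType} (c x : R) : R := if x <= c then x else c.

Definition Nh {N : nat} (h : {set 'I_N}) (s : state N) : nat :=
  #|[set l in h | s l]|.

Definition flip {N : nat} (s : state N) (l : 'I_N) : state N :=
  [ffun k => if k == l then ~~ s l else s k].

Definition node_rate {R : realType} {N M : nat} (e : 'I_M -> {set 'I_N})
  (gamma tau c : R) (s : state N) (l : 'I_N) : R :=
  if s l then gamma
  else tau * \sum_(h < M | l \in e h) fnl c (Nh (e h) s)%:R.

Definition qrate {R : realType} {N M : nat} (e : 'I_M -> {set 'I_N})
  (gamma tau c : R) (s s' : state N) : R :=
  \sum_(l < N) (if s' == flip s l then node_rate e gamma tau c s l else 0).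

Definition nI {N : nat} (s : state N) : nat := #|[set l | s l]|.

Definition NfSI {R : realType} {N M : nat} (e : 'I_M -> {set 'I_N}) (c : R)
  (s : state N) : R :=
  \sum_(l < N | ~~ s l) \sum_(h < M | l \in e h) fnl c (Nh (e h) s)%:R.

Definition expI {R : realType} {N : nat} (X : state N -> R -> R) (t : R) : R :=
  \sum_(s : state N) (nI s)%:R * X s t.
Definition expS {R : realType} {N : nat} (X : state N -> R -> R) (t : R) : R :=
  \sum_(s : state N) (N - nI s)%:R * X s t.
Definition expSI {R : realType} {N M : nat} (e : 'I_M -> {set 'I_N}) (c : R)
  (X : state N -> R -> R) (t : R) : R :=
  \sum_(s : state N) NfSI e c s * X s t.

From HB Require Import structures.
From mathcomp Require Import all_boot all_order all_algebra.
From mathcomp Require Import all_classical all_reals all_analysis.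
From mathcomp Require Import ring.
Import Order.TTheory GRing.Theory Num.Theory.
Local Open Scope ring_scope.

(* Differentiating the expectation of an observable w through the master
   equation gives the expectation of its drift: the sum over single-node
   jumps s -> flip s l of the jump rate times the jump w (flip s l) - w s.
   A jump of node l changes |s|_I by -1 (recovery, rate gamma) or by +1
   (infection, rate tau times the f-weighted count of infected hyperedges
   around l), so the drift of |s|_I is tau N^f_SI(s) - gamma |s|_I, and that
   of N - |s|_I is its opposite. *)

Lemma is_derive_weighted_sum (R : realType) (I : finType) (w : I -> R)
    (X : I -> R -> R) (dX : I -> R) (t : R) :
  (forall s, is_derive t 1 (X s) (dX s)) ->
  is_derive t 1 (fun u => \sum_s w s * X s u) (\sum_s w s * dX s).
Proof.
move=> dXP.
have -> : (fun u => \sum_s w s * X s u) = \sum_s (w s \*: X s).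
  by rewrite fct_sumE; apply/funext.
elim/big_ind2: _ => [|f g df dg fP gP|s _].
- exact: is_derive_cst.
- exact: is_deriveD.
- exact: is_deriveZ.
Qed.

Lemma sumr_offdiag_swap (R : nmodType) (I : finType) (F : I -> I -> R) :
  \sum_s \sum_(s' | s' != s) F s s' = \sum_s \sum_(s' | s' != s) F s' s.
Proof.
under eq_bigr do rewrite big_mkcond.
rewrite exchange_big; apply: eq_bigr => s _; rewrite [RHS]big_mkcond.
by apply: eq_bigr => s' _; rewrite eq_sym.
Qed.

Lemma master_weighted_sum (R : comPzRingType) (I : finType) (q : I -> I -> R)
    (w x : I -> R) :
  \sum_s w s * \sum_(s' | s' != s) (x s' * q s' s - x s * q s s')
  = \sum_s x s * \sum_s' q s s' * (w s' - w s).
Proof.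
under eq_bigr do rewrite mulr_sumr.
under eq_bigr do under eq_bigr do rewrite mulrBr.
under eq_bigr do rewrite sumrB.
rewrite sumrB sumr_offdiag_swap -sumrB.
apply: eq_bigr => s _.
rewrite [in RHS](bigD1 s) //= subrr mulr0 add0r mulr_sumr -sumrB.
by apply: eq_bigr => s' _; ring.
Qed.

Lemma qrate_jump_sum (R : realType) (N M : nat) (e : 'I_M -> {set 'I_N})
    (gamma tau c : R) (w : state N -> R) (s : state N) :
  \sum_s' qrate e gamma tau c s s' * (w s' - w s)
  = \sum_(l < N) node_rate e gamma tau c s l * (w (flip s l) - w s).
Proof.
under eq_bigr do rewrite mulr_suml.
rewrite exchange_big; apply: eq_bigr => l _.
rewrite (bigD1 (flip s l)) //= eqxx big1 ?addr0 //.
by move=> s' /negbTE ->; rewrite mul0r.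
Qed.

Lemma nI_leq (N : nat) (s : state N) : (nI s <= N)%N.
Proof. by rewrite /nI -[X in (_ <= X)%N]card_ord max_card. Qed.

Lemma nI_flip (R : pzRingType) (N : nat) (s : state N) (l : 'I_N) :
  (nI (flip s l))%:R - (nI s)%:R = (if s l then -1 else 1 : R).
Proof.
have flip_off_l : [set k | flip s l k] :\ l = [set k | s k] :\ l.
  by apply/setP=> k; rewrite !inE ffunE; case: (eqVneq k l).
rewrite /nI (cardsD1 l [set k | flip s l k]) (cardsD1 l [set k | s k]).
rewrite flip_off_l !inE ffunE eqxx.
by case: (s l); rewrite !natrD /= add0r ?addrK // opprD addrCA subrr addr0.
Qed.

Lemma nI_drift (R : realType) (N M : nat) (e : 'I_M -> {set 'I_N})
    (gamma tau c : R) (s : state N) :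
  \sum_(l < N) node_rate e gamma tau c s l * ((nI (flip s l))%:R - (nI s)%:R)
  = tau * NfSI e c s - gamma * (nI s)%:R.
Proof.
under eq_bigr do rewrite nI_flip.
rewrite (bigID (fun l => s l)) /= addrC; congr (_ + _).
  rewrite /NfSI mulr_sumr; apply: eq_bigr => l /negbTE sl.
  by rewrite /node_rate sl mulr1.
under eq_bigr => l sl do rewrite /node_rate sl mulrN1.
by rewrite sumrN sumr_const /nI cardsE mulr_natr.
Qed.

Theorem theorem1 (R : realType) (N M : nat) (e : 'I_M -> {set 'I_N})
  (gamma tau c : R) (hgamma : 0 < gamma) (htau : 0 < tau) (hc : 0 < c)
  (X : state N -> R -> R)
  (master : forall (s : state N) (t : R), 0 < t ->
     is_derive t 1 (X s)
       (\sum_(s' : state N | s' != s)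
          (X s' t * qrate e gamma tau c s' s - X s t * qrate e gamma tau c s s')))
  (t : R) (ht : 0 < t) :
  is_derive t 1 (expS X) (gamma * expI X t - tau * expSI e c X t) /\
  is_derive t 1 (expI X) (tau * expSI e c X t - gamma * expI X t).
Proof.
have derive_expectation w :=
  @is_derive_weighted_sum R (state N) w _ _ t (fun s => master s t ht).
have drift_I : \sum_s X s t * \sum_s' qrate e gamma tau c s s' *
    ((nI s')%:R - (nI s)%:R) = tau * expSI e c X t - gamma * expI X t.
  rewrite /expSI /expI !mulr_sumr -sumrB; apply: eq_bigr => s _.
  by rewrite qrate_jump_sum nI_drift; ring.
split.
- apply: is_derive_eq (derive_expectation (fun s => (N - nI s)%:R)) _.
  rewrite master_weighted_sum -[RHS]opprB -drift_I -sumrN.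
  apply: eq_bigr => s _; rewrite -mulrN -sumrN; congr (_ * _).
  by apply: eq_bigr => s' _; rewrite !natrB ?nI_leq //; ring.
- apply: is_derive_eq (derive_expectation (fun s => (nI s)%:R)) _.
  by rewrite master_weighted_sum.
Qed.
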